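(* Let $n\ge1$, let $j_1,\dots,j_n\ge 1$ be integers, let $h_k\in D_{j_k}$ and let $i_k\ge 0$ be integers for $k=1,\dots,n$. Then: (i) if $\sum_{k=1}^n i_k/j_k>1$, then $h_1^{i_1}\cdots h_n^{i_n}=0$ in ${}^\bullet\mathbb{R}$; (ii) if $p\ge1$ is an integer with $\frac1p\le \sum_{k=1}^n i_k/j_k\le 1$, then $h_1^{i_1}\cdots h_n^{i_n}\in D_p$.
   Context: A function $x:\mathbb{R}\to\mathbb{R}$ is called nilpotent if there exists $k\in\mathbb{N}$ such that $|x(t)-x(0)|^k=o(t)$ as $t\to 0$; $\mathrm{Nil}$ denotes the set of all nilpotent functions. For $x,y\in\mathrm{Nil}$ write $x\sim y$ iff $x(t)=y(t)+o(t)$ as $t\to0$. ${}^\bullet\mathbb{R}:=\mathrm{Nil}/\sim$ is the commutative ring with operations induced by pointwise sum and product. $D:=\{h\in{}^\bullet\mathbb{R} : \limsup_{t\to0}|h(t)/t|<+\infty\}$, and for integers $k\ge1$, $D_k:=\{h\in{}^\bullet\mathbb{R} : h^k\in D\}$. *)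

From Stdlib Require Import Reals Lra.
Open Scope R_scope.

Definition little_o_t (f : R -> R) : Prop :=
  forall eps, 0 < eps -> exists delta, 0 < delta /\
    forall t, 0 < Rabs t < delta -> Rabs (f t) <= eps * Rabs t.

Definition Nil (x : R -> R) : Prop :=
  exists k : nat, little_o_t (fun t => Rabs (x t - x 0) ^ k).

(* x ~ y  iff  x(t) = y(t) + o(t);  equality in the Fermat reals *)
Definition fequiv (x y : R -> R) : Prop := little_o_t (fun t => x t - y t).

Definition limsup_bounded (h : R -> R) : Prop :=
  exists M, exists delta, 0 < delta /\
    forall t, 0 < Rabs t < delta -> Rabs (h t / t) <= M.

Definition inD (h : R -> R) : Prop := Nil h /\ limsup_bounded h.

Definition inDk (k : nat) (h : R -> R) : Prop :=
  Nil h /\ inD (fun t => h t ^ k).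

Fixpoint sum_lt (n : nat) (f : nat -> R) : R :=
  match n with O => 0 | S m => sum_lt m f + f m end.
Fixpoint prod_lt (n : nat) (f : nat -> R) : R :=
  match n with O => 1 | S m => prod_lt m f * f m end.

(* the pointwise representative of h_0^{i_0} ... h_{n-1}^{i_{n-1}} *)
Definition monomial (n : nat) (h : nat -> R -> R) (i : nat -> nat) : R -> R :=
  fun t => prod_lt n (fun k => h k t ^ i k).

From Stdlib Require Import Reals Lra Lia.
Open Scope R_scope.

(* Say that g has order at least A/J when |g t|^J <= C |t|^A near 0.  A representative
   of an element of D_j has order at least 1/j, and orders add under products, so the
   monomial has order at least s = sum i_k/j_k.  Order > 1 means o(t), i.e. the class
   is 0; order >= 1/p makes the p-th power O(t).  Nilpotency makes a representative
   continuous at 0, so any positive order forces it to vanish there, and a function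
   of positive order vanishing at 0 is nilpotent. *)

(* [little_o_t f] and [limsup_bounded g] unfold to [near0] statements. *)
Definition near0 (P : R -> Prop) : Prop :=
  exists d, 0 < d /\ forall t, 0 < Rabs t < d -> P t.

Lemma near0_and (P Q : R -> Prop) :
  near0 P -> near0 Q -> near0 (fun t => P t /\ Q t).
Proof.
  intros [d1 [Hd1 HP]] [d2 [Hd2 HQ]].
  exists (Rmin d1 d2); split; [now apply Rmin_pos|].
  intros t Ht; pose proof (Rmin_l d1 d2); pose proof (Rmin_r d1 d2).
  split; [apply HP | apply HQ]; lra.
Qed.

Lemma near0_impl (P Q : R -> Prop) :
  (forall t, 0 < Rabs t -> P t -> Q t) -> near0 P -> near0 Q.
Proof. intros HPQ [d [Hd HP]]; exists d; split; auto; intros t Ht; apply HPQ; auto; lra. Qed.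

Lemma near0_linear_lt (C e : R) : 0 < e -> near0 (fun t => C * Rabs t < e).
Proof.
  intros He. pose proof (Rabs_pos C).
  exists (e / (Rabs C + 1)); split; [apply Rdiv_lt_0_compat; lra|].
  intros t Ht.
  assert (Hd : (Rabs C + 1) * (e / (Rabs C + 1)) = e) by (field; lra).
  pose proof (Rle_abs C). nra.
Qed.

Lemma near0_exists (P : R -> Prop) : near0 P -> exists t, P t.
Proof.
  intros [d [Hd HP]]; exists (d / 2); apply HP.
  rewrite Rabs_pos_eq; lra.
Qed.

Lemma pow_lt_pow_reg_l (x y : R) (n : nat) : 0 <= y -> x ^ n < y ^ n -> x < y.
Proof.
  intros Hy Hlt; destruct (Rlt_or_le x y) as [|Hyx]; auto.
  assert (y ^ n <= x ^ n) by (apply pow_incr; lra); lra.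
Qed.

Lemma pow_le_pow_r_le1 (x : R) (m n : nat) :
  0 <= x <= 1 -> (m <= n)%nat -> x ^ n <= x ^ m.
Proof.
  intros Hx Hmn; replace n with (m + (n - m))%nat by lia; rewrite pow_add.
  assert (0 <= x ^ m) by (apply pow_le; lra).
  assert (x ^ (n - m) <= 1) by (rewrite <- (pow1 (n - m)); apply pow_incr; lra).
  assert (0 <= x ^ (n - m)) by (apply pow_le; lra).
  nra.
Qed.

Definition order_ge (g : R -> R) (J A : nat) : Prop :=
  exists C, 0 <= C /\ near0 (fun t => Rabs (g t) ^ J <= C * Rabs t ^ A).

Lemma order_ge_weaken (g : R -> R) (J A B : nat) :
  (B <= A)%nat -> order_ge g J A -> order_ge g J B.
Proof.
  intros HBA [C [HC Hg]]; exists C; split; auto.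
  generalize (near0_and _ _ Hg (near0_linear_lt 1 1 Rlt_0_1)).
  apply near0_impl; intros t Ht0 [Hgt Ht].
  pose proof (pow_le_pow_r_le1 (Rabs t) B A ltac:(lra) HBA).
  nra.
Qed.

Lemma order_ge_scale (g : R -> R) (J A r : nat) :
  order_ge g J A -> order_ge g (J * r) (A * r).
Proof.
  intros [C [HC Hg]]; exists (C ^ r); split; [now apply pow_le|].
  revert Hg; apply near0_impl; intros t _ Ht.
  rewrite !pow_mult, <- Rpow_mult_distr.
  apply pow_incr; split; [apply pow_le, Rabs_pos | exact Ht].
Qed.

Lemma order_ge_pow (g : R -> R) (J A q : nat) :
  order_ge g J A -> order_ge (fun t => g t ^ q) J (A * q).
Proof.
  intros Hg; destruct (order_ge_scale g J A q Hg) as [C [HC Hgq]].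
  exists C; split; auto; revert Hgq; apply near0_impl; intros t _ Ht.
  now rewrite <- RPow_abs, <- pow_mult, Nat.mul_comm.
Qed.

Lemma order_ge_mul (f g : R -> R) (J A K B : nat) :
  order_ge f J A -> order_ge g K B ->
  order_ge (fun t => f t * g t) (J * K) (A * K + B * J).
Proof.
  intros Hf Hg.
  destruct (order_ge_scale f J A K Hf) as [C1 [HC1 Hf']].
  destruct (order_ge_scale g K B J Hg) as [C2 [HC2 Hg']].
  exists (C1 * C2); split; [now apply Rmult_le_pos|].
  generalize (near0_and _ _ Hf' Hg'); apply near0_impl; intros t Ht0 [Hft Hgt].
  rewrite (Nat.mul_comm K J) in Hgt; rewrite Rabs_mult, Rpow_mult_distr, pow_add.
  replace (C1 * C2 * (Rabs t ^ (A * K) * Rabs t ^ (B * J)))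
    with (C1 * Rabs t ^ (A * K) * (C2 * Rabs t ^ (B * J))) by ring.
  apply Rmult_le_compat; auto; apply pow_le, Rabs_pos.
Qed.

Lemma order_ge_little_o (g : R -> R) (J A : nat) :
  (1 <= J)%nat -> (J < A)%nat -> order_ge g J A -> little_o_t g.
Proof.
  intros HJ HJA Hg e He.
  destruct (order_ge_weaken g J A (J + 1) ltac:(lia) Hg) as [C [HC Hg']].
  generalize (near0_and _ _ Hg' (near0_linear_lt C (e ^ J) (pow_lt e J He))).
  apply near0_impl; intros t Ht0 [Hgt Ht]. left.
  apply (pow_lt_pow_reg_l _ _ J); [nra|].
  rewrite pow_add, pow_1, Rpow_mult_distr in *.
  assert (0 < Rabs t ^ J) by (apply pow_lt; lra). nra.
Qed.

Lemma order_ge_limsup_bounded (g : R -> R) (J A : nat) :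
  (1 <= J)%nat -> (J <= A)%nat -> order_ge g J A -> limsup_bounded g.
Proof.
  intros HJ HJA Hg; destruct (order_ge_weaken g J A J HJA Hg) as [C [HC Hg']].
  exists (C + 1); revert Hg'; apply near0_impl; intros t Ht Hgt.
  assert (HCJ : C + 1 <= (C + 1) ^ J) by (rewrite <- (pow_1 (C + 1)) at 1; apply Rle_pow; [lra | exact HJ]).
  assert (0 < Rabs t ^ J) by (apply pow_lt; lra).
  assert (Hlt : Rabs (g t) < (C + 1) * Rabs t).
  { apply (pow_lt_pow_reg_l _ _ J); [nra|]. rewrite Rpow_mult_distr; nra. }
  unfold Rdiv; rewrite Rabs_mult, Rabs_inv.
  apply (Rmult_le_reg_r (Rabs t)); [lra|].
  rewrite Rmult_assoc, Rinv_l; lra.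
Qed.

Lemma order_ge_tendsto0 (g : R -> R) (J A : nat) :
  (1 <= A)%nat -> order_ge g J A -> forall e, 0 < e -> near0 (fun t => Rabs (g t) < e).
Proof.
  intros HA Hg e He; destruct (order_ge_weaken g J A 1 HA Hg) as [C [HC Hg']].
  generalize (near0_and _ _ Hg' (near0_linear_lt C (e ^ J) (pow_lt e J He))).
  apply near0_impl; intros t _ [Hgt Ht].
  apply (pow_lt_pow_reg_l _ _ J); [lra|]. rewrite pow_1 in Hgt; lra.
Qed.

Lemma Nil_tendsto (g : R -> R) :
  Nil g -> forall e, 0 < e -> near0 (fun t => Rabs (g t - g 0) < e).
Proof.
  intros [k Hk] e He.
  generalize (near0_and _ _ (Hk 1 Rlt_0_1) (near0_linear_lt 1 (e ^ k) (pow_lt e k He))).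
  apply near0_impl; intros t _ [Hgt Ht].
  rewrite Rabs_pos_eq in Hgt by (apply pow_le, Rabs_pos).
  apply (pow_lt_pow_reg_l _ _ k); lra.
Qed.

Lemma order_ge_Nil_at0 (g : R -> R) (J A : nat) :
  Nil g -> (1 <= A)%nat -> order_ge g J A -> g 0 = 0.
Proof.
  intros HN HA Hg; destruct (Req_dec (g 0) 0) as [|Hnz]; auto; exfalso.
  pose proof (Rabs_pos_lt _ Hnz).
  set (e := Rabs (g 0) / 2).
  destruct (near0_exists _ (near0_and _ _
    (Nil_tendsto g HN e ltac:(unfold e; lra)) (order_ge_tendsto0 g J A HA Hg e ltac:(unfold e; lra))))
    as [t [Hdiff Hsmall]].
  pose proof (Rabs_triang_inv (g 0) (g t)).
  rewrite <- Rabs_Ropp, Ropp_minus_distr in Hdiff. unfold e in *; lra.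
Qed.

Lemma order_ge_Nil (g : R -> R) (J A : nat) :
  g 0 = 0 -> (1 <= A)%nat -> order_ge g J A -> Nil g.
Proof.
  intros H0 HA Hg; exists (J * 2)%nat.
  apply (order_ge_little_o _ 1 (A * 2)); [lia | lia|].
  destruct (order_ge_scale g J A 2 Hg) as [C [HC Hg2]].
  exists C; split; auto; revert Hg2; apply near0_impl; intros t _ Ht.
  now rewrite H0, Rminus_0_r, pow_1, Rabs_pos_eq by (apply pow_le, Rabs_pos).
Qed.

Lemma order_ge_inD (g : R -> R) (J A : nat) :
  g 0 = 0 -> (1 <= J)%nat -> (J <= A)%nat -> order_ge g J A -> inD g.
Proof.
  intros H0 HJ HJA Hg; split.
  - apply (order_ge_Nil g J A); auto; lia.
  - now apply (order_ge_limsup_bounded g J A).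
Qed.

Lemma inDk_order_ge (j : nat) (h : R -> R) : inDk j h -> order_ge h j 1.
Proof.
  intros [_ [_ [M Hh]]]; exists (Rabs M); split; [apply Rabs_pos|].
  revert Hh; apply near0_impl; intros t Ht Hht.
  rewrite pow_1, RPow_abs.
  replace (Rabs (h t ^ j)) with (Rabs (h t ^ j / t) * Rabs t)
    by (unfold Rdiv; rewrite Rabs_mult, Rabs_inv; field; lra).
  pose proof (Rle_abs M); nra.
Qed.

Lemma order_ge_monomial (n : nat) (j : nat -> nat) (h : nat -> R -> R) (i : nat -> nat) :
  (forall k, (k < n)%nat -> (1 <= j k)%nat) ->
  (forall k, (k < n)%nat -> order_ge (h k) (j k) 1) ->
  exists J A, (1 <= J)%nat /\
    INR A = sum_lt n (fun k => INR (i k) / INR (j k)) * INR J /\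
    order_ge (monomial n h i) J A.
Proof.
  induction n as [|n IH]; intros Hj Hh.
  - exists 1%nat, 0%nat; split; [lia|]; split; [simpl; ring|].
    exists 1; split; [lra|]; exists 1; split; [lra|]; intros t _.
    unfold monomial; simpl; rewrite Rabs_R1; lra.
  - destruct IH as [J [A [HJ [HA Hm]]]]; [auto | auto |].
    exists (J * j n)%nat, (A * j n + i n * J)%nat; split; [|split].
    + pose proof (Hj n (Nat.lt_succ_diag_r n)); lia.
    + assert (0 < INR (j n)) by (apply lt_0_INR, Hj; lia).
      rewrite plus_INR, !mult_INR, HA; simpl; field; lra.
    + rewrite <- (Nat.mul_1_l (i n)).
      exact (order_ge_mul _ _ _ _ _ _ Hm (order_ge_pow _ _ _ (i n) (Hh n (Nat.lt_succ_diag_r n)))).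
Qed.

Lemma sum_lt_neq0 (n : nat) (f : nat -> R) :
  sum_lt n f <> 0 -> exists k, (k < n)%nat /\ f k <> 0.
Proof.
  induction n as [|n IH]; simpl; intros Hs; [lra|].
  destruct (Req_dec (f n) 0) as [Hf|Hf].
  - destruct IH as [k [Hk Hfk]]; [lra|]; exists k; split; auto.
  - exists n; split; auto.
Qed.

Lemma prod_lt_eq0 (n k : nat) (f : nat -> R) : (k < n)%nat -> f k = 0 -> prod_lt n f = 0.
Proof.
  induction n as [|n IH]; intros Hk Hf; [lia|]; simpl.
  destruct (Nat.eq_dec k n) as [->|Hkn]; [rewrite Hf | rewrite IH by (auto; lia)]; ring.
Qed.

Theorem mainTheorem4 (n : nat) (j : nat -> nat) (h : nat -> R -> R) (i : nat -> nat)
  (Hn : (1 <= n)%nat)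
  (Hj : forall k, (k < n)%nat -> (1 <= j k)%nat)
  (Hh : forall k, (k < n)%nat -> inDk (j k) (h k)) :
  (sum_lt n (fun k => INR (i k) / INR (j k)) > 1 ->
     fequiv (monomial n h i) (fun _ => 0)) /\
  (forall p : nat, (1 <= p)%nat ->
     / INR p <= sum_lt n (fun k => INR (i k) / INR (j k)) <= 1 ->
     inDk p (monomial n h i)).
Proof.
  assert (Hord : forall k, (k < n)%nat -> order_ge (h k) (j k) 1)
    by (intros k Hk; apply inDk_order_ge, Hh, Hk).
  destruct (order_ge_monomial n j h i Hj Hord) as [J [A [HJ [HA Hm]]]].
  set (s := sum_lt n (fun k => INR (i k) / INR (j k))) in *.
  pose proof (le_INR 1 J HJ) as HJr; simpl in HJr.
  split.
  - intros Hs e He.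
    assert (HJA : (J < A)%nat) by (apply INR_lt; nra).
    generalize (order_ge_little_o _ J A HJ HJA Hm e He); apply near0_impl; intros t _.
    now rewrite Rminus_0_r.
  - intros p Hp [Hs _].
    pose proof (le_INR 1 p Hp) as Hpr; simpl in Hpr.
    assert (HJAp : (J <= A * p)%nat).
    { apply INR_le; rewrite mult_INR, HA.
      apply (Rmult_le_compat_r (INR p)) in Hs; [|lra].
      rewrite Rinv_l in Hs by lra; nra. }
    assert (Hm0 : monomial n h i 0 = 0).
    { assert (Hs0 : s <> 0) by (pose proof (Rinv_0_lt_compat (INR p)); lra).
      destruct (sum_lt_neq0 n _ Hs0) as [k [Hk Hik]].
      apply (prod_lt_eq0 n k _ Hk).
      rewrite (order_ge_Nil_at0 (h k) (j k) 1 (proj1 (Hh k Hk)) (le_n 1) (Hord k Hk)).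
      apply pow_i; destruct (i k); [|lia].
      exfalso; apply Hik; simpl; unfold Rdiv; ring. }
    split.
    + apply (order_ge_Nil _ J A Hm0); [nia | exact Hm].
    + apply (order_ge_inD _ J (A * p)); auto; [|now apply order_ge_pow].
      rewrite Hm0; apply pow_i; lia.
Qed.
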